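(* Let $\Gamma$ be a group and $S$ a $\Gamma$-graded inverse semigroup. Then there exist a nonempty set $X$ with a map $\deg:X\to\Gamma$ and an injective semigroup homomorphism $\psi:S\to\mathcal{I}^{\mathrm{gr}}(X)$ with $\psi(S_\alpha)\subseteq\mathcal{I}(X)_\alpha$ for all $\alpha\in\Gamma$.
   Context: Semigroups have a zero; $S$ is $\Gamma$-graded via $\deg:S\setminus\{0\}\to\Gamma$ with $\deg(st)=\deg(s)\deg(t)$ when $st\neq0$, $S_\alpha=\deg^{-1}(\alpha)\cup\{0\}$. For a set $X$, $\mathcal I(X)$ is the symmetric inverse monoid: bijections $\phi:A\to B$ between subsets of $X$, with $\mathrm{Dom}(\phi)=A$, composed as partial maps (the composite $\phi\psi$ has domain $\psi^{-1}(\mathrm{Im}\,\psi\cap\mathrm{Dom}\,\phi)$), with the empty map as zero. For $X$ with $\deg:X\to\Gamma$ put $X_\alpha=\deg^{-1}(\alpha)$ and, for $A\subseteq X$, $A_\alpha=A\cap X_\alpha$. Define $\mathcal I(X)_\alpha=\{\phi\in\mathcal I(X):\phi(\mathrm{Dom}(\phi)_\beta)\subseteq X_{\alpha\beta}\text{ for all }\beta\in\Gamma\}$ and $\mathcal I^{\mathrm{gr}}(X)=\bigcup_{\alpha\in\Gamma}\mathcal I(X)_\alpha$; this is a $\Gamma$-graded inverse subsemigroup of $\mathcal I(X)$ with components $\mathcal I(X)_\alpha$. *)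

Set Implicit Arguments.
Unset Strict Implicit.

Definition is_group (G : Type) (op : G -> G -> G) (e : G) (inv : G -> G) : Prop :=
  (forall a b c, op a (op b c) = op (op a b) c) /\
  (forall a, op e a = a /\ op a e = a) /\
  (forall a, op (inv a) a = e /\ op a (inv a) = e).

Definition is_semigroup_with_zero (S : Type) (mul : S -> S -> S) (z : S) : Prop :=
  (forall a b c, mul a (mul b c) = mul (mul a b) c) /\
  (forall a, mul z a = z /\ mul a z = z).

Definition is_inverse_semigroup (S : Type) (mul : S -> S -> S) (z : S) : Prop :=
  is_semigroup_with_zero mul z /\
  (forall s, exists t, (mul (mul s t) s = s /\ mul (mul t s) t = t) /\
     forall t', mul (mul s t') s = s /\ mul (mul t' s) t' = t' -> t' = t).

(* Gamma-grading: degS is only meaningful on S \ {0} (its value at z is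
   irrelevant); deg(st) = deg(s)deg(t) whenever st <> 0. *)
Definition is_graded (G S : Type) (op : G -> G -> G) (mul : S -> S -> S) (z : S)
  (degS : S -> G) : Prop :=
  forall s t, mul s t <> z -> s <> z -> t <> z ->
    degS (mul s t) = op (degS s) (degS t).

Definition in_component (G S : Type) (z : S) (degS : S -> G) (a : G) (s : S) : Prop :=
  s = z \/ (s <> z /\ degS s = a).

(* Elements of the symmetric inverse monoid I(X): partial injections,
   encoded as X -> option X (None = undefined); the empty map is fun _ => None. *)
Definition partial_injection (X : Type) (f : X -> option X) : Prop :=
  forall x x' y, f x = Some y -> f x' = Some y -> x = x'.

Definition pcomp (X : Type) (f g : X -> option X) : X -> option X :=
  fun x => match g x with Some y => f y | None => None end.

Definition in_graded_component (G X : Type) (op : G -> G -> G) (degX : X -> G)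
  (a : G) (f : X -> option X) : Prop :=
  partial_injection f /\ forall x y, f x = Some y -> degX y = op a (degX x).

Definition in_Igr (G X : Type) (op : G -> G -> G) (degX : X -> G)
  (f : X -> option X) : Prop :=
  exists a, in_graded_component op degX a f.

(** Wagner–Preston representation.  Each [s] acts on [X := S] by the partial
    bijection [rho_s : x |-> s x] defined on [s^-1 s S \ {0}] (with image
    [s s^-1 S \ {0}]).  Because idempotents of an inverse semigroup commute,
    [rho_(st) = rho_s rho_t]; [rho_s] determines [s], since [rho_s (s^-1 s) = s]
    for [s <> 0] while [rho_0] is the empty map.  Grading [X] by [deg] itself,
    [rho_s] maps [x] to [s x], of degree [deg s deg x]; only this
    multiplicativity of [deg] is used, not the group axioms of Gamma. *)

From Stdlib Require Import FunctionalExtensionality ClassicalEpsilon.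

Section InverseSemigroup.

Context {S : Type} (mul : S -> S -> S) (sinv : S -> S).
Local Infix "*" := mul.
Local Notation "s ^-1" := (sinv s) (at level 3, format "s ^-1").

Hypothesis mulA : forall a b c, a * (b * c) = a * b * c.
Hypothesis mul_sinv_mul : forall s, s * s^-1 * s = s.
Hypothesis sinv_mul_sinv : forall s, s^-1 * s * s^-1 = s^-1.
Hypothesis sinv_unique : forall s t, s * t * s = s -> t * s * t = t -> t = s^-1.

Ltac assoc := now rewrite <- ?mulA.

Definition idempotent (e : S) : Prop := e * e = e.

Lemma sinvK s : s^-1^-1 = s.
Proof. symmetry; apply sinv_unique; auto. Qed.

Lemma sinv_idempotent {e} : idempotent e -> e^-1 = e.
Proof. intro He; symmetry; apply sinv_unique; now rewrite !He. Qed.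

Lemma idempotent_sinv_mul s : idempotent (s^-1 * s).
Proof.
  unfold idempotent; transitivity (s^-1 * s * s^-1 * s); [assoc|].
  now rewrite sinv_mul_sinv.
Qed.

Lemma idempotent_mul_sinv s : idempotent (s * s^-1).
Proof.
  unfold idempotent; transitivity (s * s^-1 * s * s^-1); [assoc|].
  now rewrite mul_sinv_mul.
Qed.

Lemma idempotent_mul {e f} : idempotent e -> idempotent f -> idempotent (e * f).
Proof.
  intros He Hf.
  set (x := (e * f)^-1).
  assert (Hefx : e * f * x * (e * f) = e * f) by apply mul_sinv_mul.
  assert (Hxef : x * (e * f) * x = x) by apply sinv_mul_sinv.
  (* [f x e] is also an inverse of [e f], hence equal to [x]. *)
  assert (Hx : f * x * e = x).
  { apply sinv_unique.
    - transitivity (e * f * x * (e * f)); [|exact Hefx].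
      transitivity (e * (f * f) * x * (e * e) * f); [assoc|].
      rewrite He, Hf; assoc.
    - transitivity (f * (x * (e * f) * x) * e); [|now rewrite Hxef].
      transitivity (f * x * (e * e) * (f * f) * x * e); [assoc|].
      rewrite He, Hf; assoc. }
  assert (Hxx : idempotent x).
  { unfold idempotent; rewrite <- Hx at 1 2.
    transitivity (f * (x * (e * f) * x) * e); [assoc|].
    now rewrite Hxef. }
  replace (e * f) with x; [exact Hxx|].
  now rewrite <- (sinvK (e * f)), sinv_idempotent.
Qed.

Lemma idempotent_comm {e f} : idempotent e -> idempotent f -> e * f = f * e.
Proof.
  intros He Hf.
  rewrite <- (sinv_idempotent (idempotent_mul Hf He)).
  apply sinv_unique.
  - transitivity ((f * e) * (f * e)); [|apply idempotent_mul; auto].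
    transitivity (f * (e * e) * (f * f) * e); [assoc|].
    rewrite He, Hf; assoc.
  - transitivity ((e * f) * (e * f)); [|apply idempotent_mul; auto].
    transitivity (e * (f * f) * (e * e) * f); [assoc|].
    rewrite He, Hf; assoc.
Qed.

Lemma sinv_mul s t : (s * t)^-1 = t^-1 * s^-1.
Proof.
  symmetry; apply sinv_unique.
  - transitivity (s * ((t * t^-1) * (s^-1 * s)) * t); [assoc|].
    rewrite (idempotent_comm (idempotent_mul_sinv t) (idempotent_sinv_mul s)).
    transitivity ((s * s^-1 * s) * (t * t^-1 * t)); [assoc|].
    now rewrite !mul_sinv_mul.
  - transitivity (t^-1 * ((s^-1 * s) * (t * t^-1)) * s^-1); [assoc|].
    rewrite (idempotent_comm (idempotent_sinv_mul s) (idempotent_mul_sinv t)).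
    transitivity ((t^-1 * t * t^-1) * (s^-1 * s * s^-1)); [assoc|].
    now rewrite !sinv_mul_sinv.
Qed.

Lemma eq_of_mul_sinv_mul s t :
  s = t * (s^-1 * s) -> t = s * (t^-1 * t) -> s = t.
Proof.
  intros Hs Ht.
  rewrite Hs, <- (mul_sinv_mul t).
  transitivity (t * ((t^-1 * t) * (s^-1 * s))); [assoc|].
  rewrite (idempotent_comm (idempotent_sinv_mul t) (idempotent_sinv_mul s)).
  transitivity (t * (s^-1 * s) * (t^-1 * t)); [assoc|].
  now rewrite <- Hs, <- Ht.
Qed.

Variable z : S.
Hypothesis mul0s : forall a, z * a = z.
Hypothesis muls0 : forall a, a * z = z.

Definition wagner_preston_dom (s x : S) : Prop := s^-1 * s * x = x /\ x <> z.

Definition wagner_preston (s x : S) : option S :=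
  if excluded_middle_informative (wagner_preston_dom s x) then Some (s * x) else None.

Lemma wagner_preston_Some s x y :
  wagner_preston s x = Some y <-> wagner_preston_dom s x /\ y = s * x.
Proof.
  unfold wagner_preston.
  destruct (excluded_middle_informative (wagner_preston_dom s x)); split;
    intros H; try (inversion H; subst); intuition congruence.
Qed.

Lemma wagner_preston_None {s x} : ~ wagner_preston_dom s x -> wagner_preston s x = None.
Proof.
  intro H; unfold wagner_preston.
  now destruct (excluded_middle_informative (wagner_preston_dom s x)).
Qed.

Lemma wagner_preston_ext s s' x x' :
  (wagner_preston_dom s x <-> wagner_preston_dom s' x') -> s * x = s' * x' ->
  wagner_preston s x = wagner_preston s' x'.
Proof.
  intros Hdom Hval; unfold wagner_preston.
  destruct (excluded_middle_informative (wagner_preston_dom s x));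
  destruct (excluded_middle_informative (wagner_preston_dom s' x')); congruence || tauto.
Qed.

Lemma wagner_preston_dom_mul_neq0 s x : wagner_preston_dom s x -> s * x <> z.
Proof.
  intros [Hx Hxz] Hsx; apply Hxz.
  now rewrite <- Hx, <- mulA, Hsx, muls0.
Qed.

Lemma wagner_preston_dom_mulr s t x : wagner_preston_dom (s * t) x -> wagner_preston_dom t x.
Proof.
  intros [Hx Hxz]; split; [|exact Hxz].
  rewrite sinv_mul in Hx; rewrite <- Hx at 1.
  transitivity ((t^-1 * t * t^-1) * s^-1 * (s * t) * x); [assoc|].
  now rewrite sinv_mul_sinv.
Qed.

Lemma wagner_preston_dom_mul s t x :
  wagner_preston_dom t x ->
  (wagner_preston_dom (s * t) x <-> wagner_preston_dom s (t * x)).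
Proof.
  intros [Ht Hxz]; split.
  - intros [Hx _]; split; [|now apply wagner_preston_dom_mul_neq0].
    rewrite sinv_mul in Hx.
    assert (Htx : t * x = t * t^-1 * s^-1 * s * t * x) by (rewrite <- Hx at 1; assoc).
    rewrite Htx.
    transitivity ((s^-1 * s) * (t * t^-1) * s^-1 * s * t * x); [assoc|].
    rewrite <- (idempotent_comm (idempotent_mul_sinv t) (idempotent_sinv_mul s)).
    transitivity (t * t^-1 * ((s^-1 * s) * (s^-1 * s)) * t * x); [assoc|].
    rewrite (idempotent_sinv_mul s); assoc.
  - intros [Hx _]; split; [|exact Hxz].
    rewrite sinv_mul.
    transitivity (t^-1 * (s^-1 * s * (t * x))); [assoc|].
    now rewrite Hx, mulA.
Qed.

Lemma wagner_preston_mul s t :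
  wagner_preston (s * t) = pcomp (wagner_preston s) (wagner_preston t).
Proof.
  apply functional_extensionality; intro x; unfold pcomp.
  destruct (classic (wagner_preston_dom t x)) as [Ht | Ht].
  - destruct (wagner_preston_Some t x (t * x)) as [_ ->]; [|tauto].
    apply wagner_preston_ext; [now apply wagner_preston_dom_mul | symmetry; apply mulA].
  - rewrite (wagner_preston_None Ht).
    apply wagner_preston_None; intro H; now apply Ht, wagner_preston_dom_mulr with s.
Qed.

Lemma wagner_preston_partial_injection s : partial_injection (wagner_preston s).
Proof.
  intros x x' y Hx Hx'.
  apply wagner_preston_Some in Hx as [[Hx _] ->].
  apply wagner_preston_Some in Hx' as [[Hx' _] Hy].
  now rewrite <- Hx, <- Hx', <- !mulA, Hy.
Qed.

Lemma wagner_preston0 x : wagner_preston z x = None.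
Proof.
  apply wagner_preston_None; intros [Hx Hxz]; apply Hxz.
  now rewrite <- Hx, muls0, mul0s.
Qed.

Lemma wagner_preston_sinv_mul {s} : s <> z -> wagner_preston s (s^-1 * s) = Some s.
Proof.
  intro Hs; apply wagner_preston_Some; split.
  - split; [apply idempotent_sinv_mul|].
    intro H; apply Hs; now rewrite <- (mul_sinv_mul s), <- mulA, H, muls0.
  - now rewrite mulA, mul_sinv_mul.
Qed.

Lemma wagner_preston_inj s t : wagner_preston s = wagner_preston t -> s = t.
Proof.
  intro E.
  destruct (classic (s = z)) as [Hs | Hs]; destruct (classic (t = z)) as [Ht | Ht].
  - congruence.
  - pose proof (wagner_preston_sinv_mul Ht) as H.
    now rewrite <- E, Hs, wagner_preston0 in H.
  - pose proof (wagner_preston_sinv_mul Hs) as H.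
    now rewrite E, Ht, wagner_preston0 in H.
  - apply eq_of_mul_sinv_mul.
    + pose proof (wagner_preston_sinv_mul Hs) as H.
      now rewrite E in H; apply wagner_preston_Some in H as [_ H].
    + pose proof (wagner_preston_sinv_mul Ht) as H.
      now rewrite <- E in H; apply wagner_preston_Some in H as [_ H].
Qed.

Lemma wagner_preston_graded (G : Type) (op : G -> G -> G) (degS : S -> G) :
  is_graded op mul z degS ->
  forall a s, in_component z degS a s -> in_graded_component op degS a (wagner_preston s).
Proof.
  intros Hdeg a s Hs; split; [apply wagner_preston_partial_injection|].
  intros x y Hxy.
  destruct Hs as [-> | [Hs <-]]; [now rewrite wagner_preston0 in Hxy|].
  apply wagner_preston_Some in Hxy as [Hx ->].
  apply Hdeg; [now apply wagner_preston_dom_mul_neq0 | exact Hs | apply Hx].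
Qed.

End InverseSemigroup.

Theorem proposition5p4
  (G : Type) (op : G -> G -> G) (e : G) (inv : G -> G)
  (HG : is_group op e inv)
  (S : Type) (mul : S -> S -> S) (z : S)
  (HS : is_inverse_semigroup mul z)
  (degS : S -> G) (Hdeg : is_graded op mul z degS) :
  exists (X : Type) (degX : X -> G) (psi : S -> X -> option X),
    inhabited X /\
    (forall s, in_Igr op degX (psi s)) /\
    (forall s t, psi (mul s t) = pcomp (psi s) (psi t)) /\
    (forall s t, psi s = psi t -> s = t) /\
    (forall a s, in_component z degS a s -> in_graded_component op degX a (psi s)).
Proof.
  destruct HS as [[mulA mul0] Hinv].
  assert (mul0s : forall a, mul z a = z) by apply mul0.
  assert (muls0 : forall a, mul a z = z) by apply mul0.
  destruct (choice _ Hinv) as [sinv Hsinv].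
  assert (mul_sinv_mul : forall s, mul (mul s (sinv s)) s = s) by apply Hsinv.
  assert (sinv_mul_sinv : forall s, mul (mul (sinv s) s) (sinv s) = sinv s) by apply Hsinv.
  assert (sinv_unique : forall s t, mul (mul s t) s = s -> mul (mul t s) t = t -> t = sinv s)
    by (intros s t H1 H2; now apply Hsinv).
  assert (graded : forall a s, in_component z degS a s ->
            in_graded_component op degS a (wagner_preston mul sinv z s))
    by (apply wagner_preston_graded; assumption).
  exists S, degS, (wagner_preston mul sinv z).
  split; [exact (inhabits z) |].
  split; [| split; [| split]].
  - intro s; exists (degS s); apply graded.
    destruct (classic (s = z)); [left | right]; tauto.
  - intros s t; apply wagner_preston_mul; assumption.
  - intros s t; apply wagner_preston_inj; assumption.
  - exact graded.
Qed.
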